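(* Let $F$ be a field, $\Sigma$ the $\mathfrak{L}_{\rm ring}(F)$-theory of field extensions of $F$, and $n\geq1$. Then every $\exists_n\exists_1$-$\mathfrak{L}_{\rm ring}(F)$-sentence $\varphi$ satisfies ${\rm efd}_\Sigma(\varphi)\leq n$.
   Context: An $\exists_n\exists_1$-formula is one of the form $\exists x_1,\dots,x_m\psi$ with $m\le n$ and $\psi$ a positive boolean combination of formulas of the form $\eta$ or $\exists y\,\eta$ with $\eta$ quantifier-free (such sentences are existential). Essential fiber dimension: for a field $F$, an $\mathfrak{L}_{\rm ring}(F)$-theory $T$ of field extensions of $F$ and an existential $\mathfrak{L}_{\rm ring}(F)$-sentence $\varphi$, ${\rm efd}_T(\varphi)$ is the smallest $d$ such that whenever $\varphi$ holds in some $E\models T$, there exists a subextension $E_0$ of $E/F$ with ${\rm trdeg}(E_0/F)\le d$ such that $\varphi$ holds in every $E'\models T$ into which $E_0$ embeds over $F$. *)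

From HB Require Import structures.
From mathcomp Require Import all_boot all_order all_algebra.
From mathcomp Require Import mpoly.
Set Implicit Arguments. Unset Strict Implicit. Unset Printing Implicit Defensive.
Import GRing.Theory.
Local Open Scope ring_scope.

(* Variables are de Bruijn-style natural numbers.                      *)
Inductive term (F : Type) : Type :=
| TVar of nat
| TConst of F
| TAdd of term F & term F
| TOpp of term F
| TMul of term F & term F.

Inductive qf_formula (F : Type) : Type :=
| QEq of term F & term F
| QTrue
| QFalse
| QNot of qf_formula F
| QAnd of qf_formula F & qf_formula F
| QOr of qf_formula F & qf_formula F.

(* In [PEx eta] the bound variable y is the
   variable 0 of eta, and variable (i+1) of eta refers to variable i
   of the surrounding context. *)
Inductive pform (F : Type) : Type :=
| PQf of qf_formula F
| PEx of qf_formula F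
| PAnd of pform F & pform F
| POr of pform F & pform F.

(* A formula  exists x_0, ..., x_{m-1}, psi  (the x_i are the variables
   0, ..., m-1 of psi). *)
Record ex_formula (F : Type) : Type := ExForm {
  ex_nvars : nat;
  ex_matrix : pform F }.

Fixpoint term_vars_lt F (k : nat) (t : term F) : bool :=
  match t with
  | TVar i => (i < k)%N
  | TConst _ => true
  | TAdd t1 t2 => term_vars_lt k t1 && term_vars_lt k t2
  | TOpp t1 => term_vars_lt k t1
  | TMul t1 t2 => term_vars_lt k t1 && term_vars_lt k t2
  end.

Fixpoint qf_vars_lt F (k : nat) (f : qf_formula F) : bool :=
  match f with
  | QEq t1 t2 => term_vars_lt k t1 && term_vars_lt k t2
  | QTrue | QFalse => true
  | QNot g => qf_vars_lt k g
  | QAnd g h => qf_vars_lt k g && qf_vars_lt k h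
  | QOr g h => qf_vars_lt k g && qf_vars_lt k h
  end.

Fixpoint pform_vars_lt F (k : nat) (f : pform F) : bool :=
  match f with
  | PQf g => qf_vars_lt k g
  | PEx g => qf_vars_lt k.+1 g
  | PAnd g h => pform_vars_lt k g && pform_vars_lt k h
  | POr g h => pform_vars_lt k g && pform_vars_lt k h
  end.

Definition is_EnE1_sentence F (n : nat) (phi : ex_formula F) : bool :=
  (ex_nvars phi <= n)%N && pform_vars_lt (ex_nvars phi) (ex_matrix phi).

Section Semantics.
Variables (F : fieldType) (E : fieldType) (iota : {rmorphism F -> E}).

Fixpoint eval_term (e : nat -> E) (t : term F) : E :=
  match t with
  | TVar i => e i
  | TConst a => iota a
  | TAdd t1 t2 => eval_term e t1 + eval_term e t2
  | TOpp t1 => - eval_term e t1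
  | TMul t1 t2 => eval_term e t1 * eval_term e t2
  end.

Fixpoint holds_qf (e : nat -> E) (f : qf_formula F) : Prop :=
  match f with
  | QEq t1 t2 => eval_term e t1 = eval_term e t2
  | QTrue => True
  | QFalse => False
  | QNot g => ~ holds_qf e g
  | QAnd g h => holds_qf e g /\ holds_qf e h
  | QOr g h => holds_qf e g \/ holds_qf e h
  end.

Definition cons_env (b : E) (e : nat -> E) : nat -> E :=
  fun i => if i is j.+1 then e j else b.

Fixpoint holds_pform (e : nat -> E) (f : pform F) : Prop :=
  match f with
  | PQf g => holds_qf e g
  | PEx g => exists b : E, holds_qf (cons_env b e) g
  | PAnd g h => holds_pform e g /\ holds_pform e h
  | POr g h => holds_pform e g \/ holds_pform e h
  end.

Definition holds (phi : ex_formula F) : Prop :=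
  exists s : seq E, size s = ex_nvars phi /\
    holds_pform (fun i => nth 0 s i) (ex_matrix phi).

Definition subextension (S : E -> Prop) : Prop :=
  [/\ forall a : F, S (iota a),
      forall x y, S x -> S y -> S (x + y),
      forall x, S x -> S (- x),
      forall x y, S x -> S y -> S (x * y) &
      forall x, S x -> x != 0 -> S (x^-1)].

Definition alg_indep (k : nat) (x : 'I_k -> E) : Prop :=
  forall p : {mpoly F[k]}, mmap iota x p = 0 -> p = 0.

Definition trdeg_le (S : E -> Prop) (d : nat) : Prop :=
  forall (k : nat) (x : 'I_k -> E),
    (forall i, S (x i)) -> alg_indep x -> (k <= d)%N.

Definition embeds_over (S : E -> Prop) (E' : fieldType)
    (iota' : {rmorphism F -> E'}) : Prop :=
  exists g : E -> E',
    [/\ forall x y, S x -> S y -> g (x + y) = g x + g y,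
        forall x y, S x -> S y -> g (x * y) = g x * g y,
        g 1 = 1 &
        forall a : F, g (iota a) = iota' a].

End Semantics.

(* Essential fiber dimension w.r.t. Sigma = theory of field extensions  *)
(* of F (models: fields E with a ring morphism iota : F -> E).         *)
Definition efd_witness (F : fieldType) (phi : ex_formula F) (d : nat) : Prop :=
  forall (E : fieldType) (iota : {rmorphism F -> E}),
    holds iota phi ->
    exists S : E -> Prop,
      [/\ subextension iota S, trdeg_le iota S d &
          forall (E' : fieldType) (iota' : {rmorphism F -> E'}),
            embeds_over iota S iota' -> holds iota' phi].

(* efd_Sigma(phi) <= n : the least d with [efd_witness phi d] exists and
   is at most n. *)
Definition efd_Sigma_le (F : fieldType) (phi : ex_formula F) (n : nat) : Prop :=
  exists d : nat, (d <= n)%N /\ efd_witness phi d.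

(* Let s witness the outer quantifiers of phi in E and let R = F[s] be the ring
   of values of terms at s.  For each existential subformula  exists y, eta  that
   holds, fix a witness b.  If b is algebraic over R, some nonzero c in R makes
   c * b integral over R, and b = (c * b) / c.  If b is transcendental over R,
   the truth of eta(s, y) only depends on which of finitely many polynomials over
   R vanish at y, so when R is infinite an element of R avoiding their roots is
   again a witness, and when R is finite (s is then algebraic over F) one
   transcendental t serves all such subformulas; this is where n >= 1 is used.
   So the witnesses lie in a field generated by d <= n "free" elements and
   finitely many elements integral over them.  Its transcendence degree is at
   most d: after clearing a common denominator, the monomials with exponents at
   most D in k > d of its elements lie in a space of dimension O(D^d) < (D+1)^k, so
   they are linearly dependent.  An embedding over F of this field into E'
   carries s and the witnesses along, hence phi holds in E'. *)

From mathcomp Require Import all_boot all_order all_algebra.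
From mathcomp Require Import mpoly.
From mathcomp Require Import zify ring.
From Stdlib Require Import Classical FunctionalExtensionality.
Set Implicit Arguments. Unset Strict Implicit. Unset Printing Implicit Defensive.
Import GRing.Theory.
Local Open Scope ring_scope.

Section LinearDependence.
Variables (F E : fieldType) (io : {rmorphism F -> E}).

Lemma sum_pairs_coef (J : finType) (v : J -> E) (l : seq (J * F)) :
  exists c : J -> F, \sum_(p <- l) io p.2 * v p.1 = \sum_j io (c j) * v j.
Proof.
elim: l => [|[j0 x] l [c IH]].
  by exists (fun=> 0); rewrite big_nil big1 // => j _; rewrite rmorph0 mul0r.
exists (fun j => c j + (if j == j0 then x else 0)).
rewrite big_cons IH /= [RHS](eq_bigr (fun j =>
  io (c j) * v j + io (if j == j0 then x else 0) * v j)); last first.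
  by move=> j _; rewrite rmorphD mulrDl.
rewrite big_split /= addrC; congr (_ + _).
rewrite (bigD1 j0) //= eqxx big1 ?addr0 // => j /negbTE ->.
by rewrite rmorph0 mul0r.
Qed.

Lemma lin_dep_of_span_card (I J : finType) (u : I -> E) (v : J -> E) :
  (#|J| < #|I|)%N ->
  (forall i, exists l : seq (J * F), u i = \sum_(p <- l) io p.2 * v p.1) ->
  exists2 a : I -> F, exists i, a i != 0 & \sum_i io (a i) * u i = 0.
Proof.
move=> ltJI u_span.
have [C uE] : exists C : I -> J -> F, forall i, u i = \sum_j io (C i j) * v j.
  apply: (fin_all_exists (P := fun i C => u i = \sum_j io (C j) * v j)) => i.
  by have [l ->] := u_span i; apply: sum_pairs_coef.
pose M : 'M[F]_(#|I|, #|J|) := \matrix_(i, j) C (enum_val i) (enum_val j).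
have kM_nz : kermx M != 0.
  by rewrite -mxrank_eq0 mxrank_ker subn_eq0 -ltnNge (leq_ltn_trans (rank_leq_col M)).
have [r kr_nz] : exists r, row r (kermx M) != 0.
  apply/existsP; apply: contraNT kM_nz; rewrite negb_exists => /forallP kr0.
  by apply/eqP/row_matrixP => r; rewrite row0; apply/eqP/negbNE/kr0.
pose a := row r (kermx M).
have a_ker : a *m M = 0 by rewrite -row_mul mulmx_ker row0.
exists (fun i => a 0 (enum_rank i)).
  have /existsP [i ai_nz] : [exists i, a 0 i != 0].
    apply: contraNT kr_nz; rewrite negb_exists => /forallP a0.
    by apply/eqP/rowP => i; rewrite [RHS]mxE; apply/eqP/negbNE/a0.
  by exists (enum_val i); rewrite enum_valK.
rewrite (eq_bigr (fun i => \sum_j io (a 0 (enum_rank i) * C i j) * v j)); last first.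
  by move=> i _; rewrite uE mulr_sumr; apply: eq_bigr => j _; rewrite rmorphM mulrA.
rewrite exchange_big /= big1 // => j _; rewrite -mulr_suml -rmorph_sum.
suff -> : \sum_i a 0 (enum_rank i) * C i j = (a *m M) 0 (enum_rank j).
  by rewrite a_ker mxE rmorph0 mul0r.
rewrite mxE (reindex (@enum_val I [pred _ | true])) /=; last first.
  by apply: onW_bij; apply: enum_val_bij.
by apply: eq_bigr => i _; rewrite enum_valK [M _ _]mxE enum_rankK.
Qed.

Lemma alg_dep_of_lin_dep k D (z : 'I_k -> E) (a : {ffun 'I_k -> 'I_D.+1} -> F) :
  (exists al, a al != 0) ->
  \sum_al io (a al) * \prod_(i < k) z i ^+ al i = 0 -> ~ alg_indep io z.
Proof.
move=> [al0 a_nz] rel z_indep.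
pose mnm (al : {ffun 'I_k -> 'I_D.+1}) : 'X_{1..k} := [multinom (al i : nat) | i < k].
have mnmE al i : mnm al i = al i by rewrite /mnm multinomE tnth_mktuple.
have mnm_inj : injective mnm.
  by move=> al al' eq_al; apply/ffunP => i; apply/val_inj; rewrite /= -!mnmE eq_al.
pose p : {mpoly F[k]} := \sum_al a al *: 'X_[mnm al].
have /z_indep /(congr1 (mcoeff (mnm al0))) : mmap io z p = 0.
  rewrite -rel /p raddf_sum; apply: eq_bigr => al _.
  by rewrite /= mmapZ mmapX /mmap1; congr (_ * _); apply: eq_bigr => i _; rewrite mnmE.
rewrite mcoeff0 /p raddf_sum (bigD1 al0) //= mcoeffZ mcoeffX eqxx mulr1 big1 ?addr0.
  by move/eqP; rewrite (negbTE a_nz).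
by move=> al al_ne; rewrite mcoeffZ mcoeffX (inj_eq mnm_inj) (negbTE al_ne) mulr0.
Qed.

End LinearDependence.

Section WordSpans.
Variables (F E : fieldType) (io : {rmorphism F -> E}) (gen : nat -> E).
Implicit Types ok : pred (seq nat).

Definition monom (u : seq nat) : E := \prod_(k <- u) gen k.

Definition wspan ok (z : E) :=
  exists2 l : seq (seq nat * F), all (fun p => ok p.1) l &
    z = \sum_(p <- l) io p.2 * monom p.1.

Lemma monom_nil : monom [::] = 1. Proof. exact: big_nil. Qed.

Lemma monom_cons k u : monom (k :: u) = gen k * monom u.
Proof. exact: big_cons. Qed.

Lemma monom_cat u v : monom (u ++ v) = monom u * monom v.
Proof. exact: big_cat. Qed.

Lemma monom_nseq a k : monom (nseq a k) = gen k ^+ a.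
Proof. by elim: a => [|a IH]; rewrite ?monom_nil //= monom_cons IH exprS. Qed.

Lemma monom_split k u :
  monom u = monom (filter (predC1 k) u) * gen k ^+ count_mem k u.
Proof.
elim: u => [|a u IH] /=; first by rewrite monom_nil mulr1.
rewrite monom_cons IH; case: eqP => [->|_] /=; first by rewrite exprS mulrCA.
by rewrite monom_cons mulrA.
Qed.

Lemma monom_count N u : all (fun k => k < N)%N u ->
  monom u = \prod_(i < N) gen i ^+ count_mem (i : nat) u.
Proof.
elim: u => [_|a u IH /andP [aN /IH uE]]; first by rewrite monom_nil big1.
rewrite monom_cons uE [RHS](eq_bigr (fun i : 'I_N =>
  gen i ^+ (a == i) * gen i ^+ count_mem (i : nat) u)); last by move=> i _; rewrite exprD.
rewrite big_split /=; congr (_ * _).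
rewrite (bigD1 (Ordinal aN)) //= eqxx big1 ?mulr1 // => j.
by rewrite -(inj_eq val_inj) eq_sym => /negbTE /= ->.
Qed.

Lemma wspanW ok ok' z :
  (forall u, ok u -> ok' u) -> wspan ok z -> wspan ok' z.
Proof. by move=> okW [l /allP l_ok ->]; exists l => //; apply/allP => p /l_ok /okW. Qed.

Lemma wspan0 ok : wspan ok 0.
Proof. by exists [::]; rewrite ?big_nil. Qed.

Lemma wspanD ok z y : wspan ok z -> wspan ok y -> wspan ok (z + y).
Proof.
by move=> [l1 ok1 ->] [l2 ok2 ->]; exists (l1 ++ l2); rewrite ?all_cat ?ok1 ?big_cat.
Qed.

Lemma wspanZ ok a z : wspan ok z -> wspan ok (io a * z).
Proof.
move=> [l l_ok ->]; exists [seq (p.1, a * p.2) | p <- l]; first by rewrite all_map.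
by rewrite big_map mulr_sumr; apply: eq_bigr => p _; rewrite rmorphM mulrA.
Qed.

Lemma wspanN ok z : wspan ok z -> wspan ok (- z).
Proof. by move=> /(wspanZ (-1)); rewrite rmorphN1 mulN1r. Qed.

Lemma wspan_monomZ ok a u : ok u -> wspan ok (io a * monom u).
Proof. by exists [:: (u, a)]; rewrite /= ?andbT ?big_seq1. Qed.

Lemma wspan_monom ok u : ok u -> wspan ok (monom u).
Proof. by move=> /(wspan_monomZ 1); rewrite rmorph1 mul1r. Qed.

Lemma wspan_sum ok (s : seq (seq nat * F)) (f : seq nat * F -> E) :
  (forall p, p \in s -> wspan ok (f p)) -> wspan ok (\sum_(p <- s) f p).
Proof.
elim: s => [|p s IH] f_ok; first by rewrite big_nil; apply: wspan0.
rewrite big_cons; apply: wspanD; first by apply: f_ok; rewrite mem_head.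
by apply: IH => q q_s; apply: f_ok; rewrite inE q_s orbT.
Qed.

Lemma wspan_mulr ok ok' z y :
  (forall u, ok u -> wspan ok' (monom u * y)) -> wspan ok z -> wspan ok' (z * y).
Proof.
move=> okM [l /allP l_ok ->]; rewrite mulr_suml; apply: wspan_sum => p p_l.
by rewrite -mulrA; apply/wspanZ/okM/l_ok.
Qed.

Lemma wspan_mull ok ok' z y :
  (forall v, ok v -> wspan ok' (z * monom v)) -> wspan ok y -> wspan ok' (z * y).
Proof.
move=> okM [l /allP l_ok ->]; rewrite mulr_sumr; apply: wspan_sum => p p_l.
by rewrite mulrCA; apply/wspanZ/okM/l_ok.
Qed.

Lemma wspan_mul ok1 ok2 ok3 z y :
  (forall u v, ok1 u -> ok2 v -> ok3 (u ++ v)) ->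
  wspan ok1 z -> wspan ok2 y -> wspan ok3 (z * y).
Proof.
move=> okM z_ok y_ok; apply: wspan_mulr z_ok => u u_ok.
by apply: wspan_mull y_ok => v v_ok; rewrite -monom_cat; apply/wspan_monom/okM.
Qed.

End WordSpans.

Lemma count_mem_filterC1 (T : eqType) (k i : T) (u : seq T) :
  count_mem i (filter (predC1 k) u) = if i == k then 0%N else count_mem i u.
Proof.
rewrite count_filter; case: eqP => [->|/eqP ik].
  by rewrite (eq_count (a2 := pred0)) ?count_pred0 // => x /=; case: eqP => // ->.
by apply: eq_count => x /=; case: eqP => // ->; rewrite ik.
Qed.

Lemma size_sum_count_mem N (u : seq nat) : all (fun k => k < N)%N u ->
  size u = (\sum_(k < N) count_mem (k : nat) u)%N.
Proof.
elim: u => [|a u IH /andP [aN /IH uE]]; first by rewrite big1.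
rewrite /= uE big_split /= -add1n; congr addn.
rewrite (bigD1 (Ordinal aN)) //= eqxx big1 // => j.
by rewrite -(inj_eq val_inj) eq_sym => /negbTE ->.
Qed.

Lemma leq_expn2r m n e : (m <= n)%N -> (m ^ e <= n ^ e)%N.
Proof. by move=> le_mn; elim: e => // e IH; rewrite !expnS leq_mul. Qed.

(* The [D.+1 ^ k] monomials of exponents at most [D] in [k] elements outnumber
   the exponent vectors of the bounded words they land in. *)
Lemma monomial_count_lt (k nf r M c : nat) : (nf < k)%N ->
  (((k * ((k * c + 1) ^ nf * M.+1 ^ r) * c).+1) ^ nf * M.+1 ^ r <
   ((k * c + 1) ^ nf * M.+1 ^ r).+1 ^ k)%N.
Proof.
move=> nf_k; set D := ((k * c + 1) ^ nf * M.+1 ^ r)%N.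
have le_kDc : ((k * D * c).+1 <= (k * c + 1) * D.+1)%N by nia.
apply: (@leq_trans (((k * c + 1) * D.+1) ^ nf * M.+1 ^ r).+1).
  by rewrite ltnS leq_mul // leq_expn2r.
rewrite expnMn mulnAC -/D (@leq_trans (D.+1 ^ nf.+1)) ?leq_pexp2l //.
by rewrite expnS ltn_mul2r ltnSn expn_gt0.
Qed.

(* [gen k ^+ M.+1] lying in the span of these words is an integral dependence
   of [gen k] over the letters below [nf]. *)
Definition integral_word (nf k M : nat) : pred (seq nat) := fun v =>
  [&& all (fun i => (i < nf) || (i == k)) v,
      all (fun i => count_mem i v <= M) (iota 0 nf) & count_mem k v <= M]%N.

Section BoundedWords.
Variables (F E : fieldType) (io : {rmorphism F -> E}) (gen : nat -> E).
Variables (nf r M : nat).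
Local Notation N := (nf + r)%N.
Local Notation monom := (monom gen).
Local Notation wspan := (wspan io gen).

(* Letters below [nf] are free and may occur [B] times; the others are
   integral and, by [gen_integral], need not occur more than [M] times.  The
   spans of bounded words exhaust the algebra generated by [gen], but their
   dimension only grows like [B ^ nf]. *)
Definition letter_bound B k := if (k < nf)%N then B else M.

Definition bounded B : pred (seq nat) := fun u =>
  all (fun k => k < N)%N u &&
  all (fun k => count_mem k u <= letter_bound B k)%N (iota 0 N).

Hypothesis gen_integral :
  forall k, (nf <= k < N)%N -> wspan (integral_word nf k M) (gen k ^+ M.+1).

Lemma boundedP B u :
  reflect ((forall k, k \in u -> k < N) /\
           (forall k, k < N -> count_mem k u <= letter_bound B k))%N
          (bounded B u).
Proof.
apply: (iffP andP) => -[/allP uN cnt]; split => //.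
  by move=> k kN; apply: (allP cnt); rewrite mem_iota.
by apply/allP => k; rewrite mem_iota => /andP [_ /cnt].
Qed.

Lemma boundedW B B' u : (B <= B')%N -> bounded B u -> bounded B' u.
Proof.
move=> BB' /boundedP [uN cnt]; apply/boundedP; split => // k /cnt.
by rewrite /letter_bound; case: ifP => // _ /leq_trans; apply.
Qed.

Lemma wspan_boundedW B B' z :
  (B <= B')%N -> wspan (bounded B) z -> wspan (bounded B') z.
Proof. by move=> BB'; apply: wspanW => u; apply: boundedW. Qed.

Lemma bounded_nil B : bounded B [::].
Proof. by apply/boundedP; split. Qed.

Lemma bounded_cons B u k : bounded B u -> (k < N)%N ->
  (k < nf)%N || (count_mem k u < M)%N -> bounded B.+1 (k :: u).
Proof.
move=> /boundedP [uN cnt] kN room; apply/boundedP; split.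
  by move=> i; rewrite inE => /predU1P [->|/uN].
move=> i iN; have := cnt i iN; rewrite /= /letter_bound.
case: (eqVneq k i) => [<-|_] /=; case: ifP => k_nf //;
  rewrite ?k_nf /= in room; lia.
Qed.

Lemma bounded_reduce B u k v : bounded B u -> (nf <= k < N)%N ->
  count_mem k u = M -> integral_word nf k M v ->
  bounded (B + M) (filter (predC1 k) u ++ v).
Proof.
move=> /boundedP [uN cnt] /andP [nf_k kN] cnt_k /and3P [/allP v_nf /allP v_free v_k].
apply/boundedP; split => [i|i iN].
  rewrite mem_cat mem_filter => /orP [/andP [_ /uN] //|/v_nf /orP [i_nf|/eqP -> //]].
  exact: leq_trans i_nf (leq_addr _ _).
have := cnt i iN; rewrite count_cat count_mem_filterC1 /letter_bound.
case: ifP => i_nf.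
  have -> : (i == k) = false by apply/eqP => ik; rewrite ik in i_nf; lia.
  by have := v_free i; rewrite mem_iota add0n i_nf => /(_ isT); lia.
case: (eqVneq i k) => [->|ik]; first by rewrite add0n.
suff -> : count_mem i v = 0%N by rewrite addn0.
by apply/count_memPn/negP => /v_nf; rewrite i_nf (negbTE ik).
Qed.

Lemma wspan_bounded_mul_gen B u k : bounded B u -> (k < N)%N ->
  wspan (bounded (B + M.+1)) (monom u * gen k).
Proof.
move=> u_ok kN.
have [k_nf|nf_k] := ltnP k nf.
  rewrite mulrC -monom_cons; apply: wspan_monom; apply: (@boundedW B.+1); first lia.
  by apply: bounded_cons; rewrite ?k_nf.
have /boundedP [_ /(_ k kN)] := u_ok.
rewrite /letter_bound ltnNge nf_k /= leq_eqVlt => /orP [/eqP cnt_k|cnt_k]; last first.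
  rewrite mulrC -monom_cons; apply: wspan_monom; apply: (@boundedW B.+1); first lia.
  by apply: bounded_cons; rewrite ?cnt_k ?orbT.
have [l /allP l_ok lE] : wspan (integral_word nf k M) (gen k ^+ M.+1).
  by apply: gen_integral; rewrite nf_k kN.
rewrite (monom_split gen k u) cnt_k -mulrA -exprSr lE mulr_sumr.
apply: wspan_sum => p /l_ok p_ok; rewrite mulrCA -monom_cat.
apply/wspanZ/wspan_monom; apply: (@boundedW (B + M)); first lia.
by apply: bounded_reduce; rewrite ?nf_k.
Qed.

Lemma bounded_size B u : bounded B u -> (size u <= N * (B + M))%N.
Proof.
move=> /[dup] /andP [uN _] /boundedP [_ cnt]; rewrite (size_sum_count_mem uN).
apply: (@leq_trans (\sum_(k < N) (B + M))%N).
  apply: leq_sum => k _; have := cnt k (ltn_ord k).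
  by rewrite /letter_bound; case: ifP => _; lia.
by rewrite big_const_ord iter_addn_0 mulnC.
Qed.

Lemma wspan_bounded_const a : wspan (bounded 0) (io a).
Proof. by rewrite -[io a]mulr1 -(monom_nil gen); apply/wspan_monomZ/bounded_nil. Qed.

Lemma wspan_bounded_gen k : (k < N)%N -> wspan (bounded M.+1) (gen k).
Proof.
move=> kN; rewrite -[gen k]mul1r -(monom_nil gen) -[M.+1]add0n.
exact: wspan_bounded_mul_gen (bounded_nil 0) kN.
Qed.

Lemma wspan_bounded_mul_monom B z v :
  wspan (bounded B) z -> all (fun k => k < N)%N v ->
  wspan (bounded (B + size v * M.+1)) (z * monom v).
Proof.
elim: v B z => [|k v IH] B z z_ok /=; first by rewrite addn0 monom_nil mulr1.
case/andP => kN vN; rewrite monom_cons mulrA mulSn addnA.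
by apply: IH vN; apply: wspan_mulr z_ok => u u_ok; apply: wspan_bounded_mul_gen.
Qed.

Lemma wspan_bounded_mul B B' z y :
  wspan (bounded B) z -> wspan (bounded B') y ->
  wspan (bounded (B + N * (B' + M) * M.+1)) (z * y).
Proof.
move=> z_ok; apply: wspan_mull => v v_ok.
apply: wspan_boundedW (wspan_bounded_mul_monom z_ok _); last by case/andP: v_ok.
by rewrite leq_add2l leq_mul2r bounded_size ?orbT.
Qed.

Lemma wspan_bounded_mulX B0 j y x i :
  wspan (bounded (j * (B0 + N * (B0 + M) * M.+1))) y -> wspan (bounded B0) x ->
  wspan (bounded ((j + i) * (B0 + N * (B0 + M) * M.+1))) (y * x ^+ i).
Proof.
move=> y_ok x_ok; elim: i => [|i IH]; first by rewrite addn0 expr0 mulr1.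
rewrite exprSr mulrA; apply: wspan_boundedW (wspan_bounded_mul IH x_ok).
by rewrite addnS mulSn addnC leq_add2r; lia.
Qed.

Definition gen_alg z := exists B, wspan (bounded B) z.

Definition gen_field z :=
  exists a b, [/\ gen_alg a, gen_alg b, b != 0 & z = a / b].

Lemma gen_algD z y : gen_alg z -> gen_alg y -> gen_alg (z + y).
Proof.
move=> [B zB] [B' yB']; exists (B + B')%N; apply: wspanD.
  exact: wspan_boundedW (leq_addr _ _) zB.
exact: wspan_boundedW (leq_addl _ _) yB'.
Qed.

Lemma gen_algN z : gen_alg z -> gen_alg (- z).
Proof. by move=> [B zB]; exists B; apply: wspanN. Qed.

Lemma gen_algM z y : gen_alg z -> gen_alg y -> gen_alg (z * y).
Proof. by move=> [B zB] [B' yB']; eexists; apply: wspan_bounded_mul zB yB'. Qed.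

Lemma gen_alg_const a : gen_alg (io a).
Proof. by exists 0%N; apply: wspan_bounded_const. Qed.

Lemma gen_alg_gen k : (k < N)%N -> gen_alg (gen k).
Proof. by exists M.+1; apply: wspan_bounded_gen. Qed.

Lemma gen_field_alg z : gen_alg z -> gen_field z.
Proof.
move=> z_alg; exists z, 1; rewrite divr1 oner_neq0 -(rmorph1 io).
by split => //; apply: gen_alg_const.
Qed.

Lemma gen_field_subextension : subextension io gen_field.
Proof.
split.
- by move=> a; apply/gen_field_alg/gen_alg_const.
- move=> _ _ [a [b [a_alg b_alg b_nz ->]]] [c [d [c_alg d_alg d_nz ->]]].
  exists (a * d + c * b), (b * d); split; rewrite ?mulf_neq0 //.
  + by apply: gen_algD; apply: gen_algM.
  + exact: gen_algM.
  + by field; apply/andP.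
- move=> _ [a [b [a_alg b_alg b_nz ->]]]; exists (- a), b.
  by split; rewrite ?mulNr //; apply: gen_algN.
- move=> _ _ [a [b [a_alg b_alg b_nz ->]]] [c [d [c_alg d_alg d_nz ->]]].
  exists (a * c), (b * d); split; rewrite ?mulf_neq0 //; try exact: gen_algM.
  by field; apply/andP.
- move=> _ [a [b [a_alg b_alg b_nz ->]]] ab_nz; exists b, a; split; rewrite ?invf_div //.
  by apply: contraNneq ab_nz => ->; rewrite mul0r.
Qed.

Lemma gen_field_common_den (zs : seq E) : {in zs, forall z, gen_field z} ->
  exists B b, [/\ wspan (bounded B) b, b != 0 &
                  {in zs, forall z, wspan (bounded B) (b * z)}].
Proof.
elim: zs => [|w zs IH] zs_field.
  by exists 0%N, 1; rewrite oner_neq0 -(rmorph1 io); split => //; apply: wspan_bounded_const.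
have [|B0 [b [b_ok b_nz bz_ok]]] := IH.
  by move=> z z_zs; apply: zs_field; rewrite inE z_zs orbT.
have [a [c [[Ba a_ok] [Bc c_ok] c_nz wE]]] := zs_field w (mem_head _ _).
pose B1 := (B0 + N * (Ba + Bc + B0 + M) * M.+1)%N.
have mul_ok B x y : (B <= Ba + Bc + B0)%N -> wspan (bounded B0) x ->
    wspan (bounded B) y -> wspan (bounded B1) (x * y).
  move=> le_B x_ok y_ok; apply: wspan_boundedW (wspan_bounded_mul x_ok y_ok).
  by rewrite leq_add2l leq_mul2r leq_mul2l leq_add2r le_B !orbT.
exists B1, (b * c); split; first (by apply: mul_ok b_ok c_ok; lia); first exact: mulf_neq0.
move=> z; rewrite inE => /predU1P [->|z_zs].
  by rewrite wE [_ * (a / c)](_ : _ = b * a); [apply: mul_ok b_ok a_ok; lia | field].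
by rewrite mulrAC; apply: mul_ok (bz_ok z z_zs) c_ok; lia.
Qed.

Lemma wspan_cleared_monomial B0 b k D (z : 'I_k -> E) (al : {ffun 'I_k -> 'I_D.+1}) :
  wspan (bounded B0) b -> (forall i, wspan (bounded B0) (b * z i)) ->
  wspan (bounded (k * D * (B0 + N * (B0 + M) * M.+1)))
        (b ^+ (k * D) * \prod_(i < k) z i ^+ al i).
Proof.
move=> b_ok bz_ok; set c := (B0 + N * (B0 + M) * M.+1)%N.
have part_ok (s : seq 'I_k) : wspan (bounded ((\sum_(i <- s) (al i : nat)) * c))
                                    (\prod_(i <- s) (b * z i) ^+ al i).
  elim: s => [|i s IH]; first by rewrite !big_nil -(rmorph1 io); apply: wspan_bounded_const.
  by rewrite !big_cons mulrC addnC; apply: wspan_bounded_mulX.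
have sum_le : (\sum_(i < k) (al i : nat) <= k * D)%N.
  apply: (@leq_trans (\sum_(i < k) D)%N); first by apply: leq_sum => i _; rewrite -ltnS.
  by rewrite big_const_ord iter_addn_0 mulnC.
have := wspan_bounded_mulX (k * D - \sum_(i < k) (al i : nat)) (part_ok (index_enum _)) b_ok.
rewrite subnKC //; congr wspan.
rewrite (eq_bigr (fun i => b ^+ al i * z i ^+ al i)) => [|i _]; last by rewrite exprMn.
by rewrite big_split /= prodrXr -[in RHS](subnKC sum_le) exprD mulrAC.
Qed.

Definition expmonom B (al : {ffun 'I_nf -> 'I_B.+1} * {ffun 'I_r -> 'I_M.+1}) : E :=
  (\prod_(i < nf) gen i ^+ al.1 i) * \prod_(j < r) gen (nf + j) ^+ al.2 j.

Definition exponents B (u : seq nat) :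
    {ffun 'I_nf -> 'I_B.+1} * {ffun 'I_r -> 'I_M.+1} :=
  ([ffun i : 'I_nf => inord (count_mem (i : nat) u)],
   [ffun j : 'I_r => inord (count_mem (nf + j)%N u)]).

Lemma monom_exponents B u : bounded B u -> monom u = expmonom (exponents B u).
Proof.
move=> /[dup] /andP [uN _] /boundedP [_ cnt].
rewrite (monom_count gen uN) big_split_ord; congr (_ * _); apply: eq_bigr => i _;
  rewrite ffunE inordK // ltnS.
  by have := cnt i (ltn_addr _ (ltn_ord i)); rewrite /letter_bound ltn_ord.
by have := cnt (nf + i)%N; rewrite ltn_add2l ltn_ord /letter_bound ltnNge leq_addr; apply.
Qed.

Lemma wspan_bounded_expmonom B z : wspan (bounded B) z ->
  exists l : seq (({ffun 'I_nf -> 'I_B.+1} * {ffun 'I_r -> 'I_M.+1}) * F),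
    z = \sum_(p <- l) io p.2 * expmonom p.1.
Proof.
move=> [l /allP l_ok ->]; exists [seq (exponents B p.1, p.2) | p <- l].
by rewrite big_map; apply: eq_big_seq => p /l_ok p_ok; rewrite (monom_exponents p_ok).
Qed.

Lemma gen_field_trdeg_le n : (nf <= n)%N -> trdeg_le io gen_field n.
Proof.
move=> nf_n k z z_field z_indep; rewrite leqNgt; apply/negP => n_k.
have [|B0 [b [b_ok b_nz bz_ok]]] := @gen_field_common_den [seq z i | i <- enum 'I_k].
  by move=> _ /mapP [i _ ->].
have {}bz_ok i : wspan (bounded B0) (b * z i) by apply/bz_ok/map_f; rewrite mem_enum.
set c := (B0 + N * (B0 + M) * M.+1)%N.
set D := ((k * c + 1) ^ nf * M.+1 ^ r)%N.
pose u (al : {ffun 'I_k -> 'I_D.+1}) := b ^+ (k * D) * \prod_(i < k) z i ^+ al i.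
have u_span (al : {ffun 'I_k -> 'I_D.+1}) :=
  wspan_bounded_expmonom (wspan_cleared_monomial al b_ok bz_ok).
have [|a a_nz rel] := lin_dep_of_span_card (u := u) (v := @expmonom (k * D * c)) _ u_span.
  by rewrite card_prod !card_ffun !card_ord; apply: monomial_count_lt; lia.
apply: alg_dep_of_lin_dep a_nz _ z_indep.
apply: (mulfI (expf_neq0 (k * D) b_nz)); rewrite mulr0 -[RHS]rel mulr_sumr.
by apply: eq_bigr => al _; rewrite mulrCA.
Qed.

End BoundedWords.

Lemma pigeonhole (T : eqType) (h : nat -> T) (sq : seq T) :
  (forall i, h i \in sq) -> exists a b, (a < b)%N /\ h a = h b.
Proof.
move=> h_sq; apply: NNPP => h_inj.
have h_inj_in : {in iota 0 (size sq).+1 &, injective h}.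
  move=> a b _ _ hab; case: (ltngtP a b) => // ab; case: h_inj.
    by exists a, b.
  by exists b, a.
have h_uniq : uniq [seq h i | i <- iota 0 (size sq).+1].
  by rewrite map_inj_in_uniq ?iota_uniq.
have /(uniq_leq_size h_uniq) : {subset [seq h i | i <- iota 0 (size sq).+1] <= sq}.
  by move=> _ /mapP [i _ ->].
by rewrite size_map size_iota ltnn.
Qed.

Section TermValues.
Variables (F E : fieldType) (io : {rmorphism F -> E}) (s : seq E).
Local Notation env := (fun i : nat => nth 0 s i).

Definition term_value z := exists t : term F, z = eval_term io env t.

Lemma term_value_const a : term_value (io a). Proof. by exists (TConst a). Qed.

Lemma term_value0 : term_value 0.
Proof. by rewrite -(rmorph0 io); apply: term_value_const. Qed.

Lemma term_value1 : term_value 1.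
Proof. by rewrite -(rmorph1 io); apply: term_value_const. Qed.

Lemma term_value_var i : term_value (nth 0 s i). Proof. by exists (TVar F i). Qed.

Lemma term_valueD x y : term_value x -> term_value y -> term_value (x + y).
Proof. by move=> [t ->] [t' ->]; exists (TAdd t t'). Qed.

Lemma term_valueN x : term_value x -> term_value (- x).
Proof. by move=> [t ->]; exists (TOpp t). Qed.

Lemma term_valueM x y : term_value x -> term_value y -> term_value (x * y).
Proof. by move=> [t ->] [t' ->]; exists (TMul t t'). Qed.

Lemma term_valueX x k : term_value x -> term_value (x ^+ k).
Proof.
by move=> x_val; elim: k => [|k IH]; [apply: term_value1 | rewrite exprS; apply: term_valueM].
Qed.

Lemma term_value_sum (I : Type) (r : seq I) (P : pred I) (f : I -> E) :
  (forall i, term_value (f i)) -> term_value (\sum_(i <- r | P i) f i).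
Proof. by move=> f_val; apply: big_ind => //; [apply: term_value0 | apply: term_valueD]. Qed.

Fixpoint term_poly (t : term F) : {poly E} :=
  match t with
  | TVar 0 => 'X
  | TVar i.+1 => (nth 0 s i)%:P
  | TConst a => (io a)%:P
  | TAdd t1 t2 => term_poly t1 + term_poly t2
  | TOpp t1 => - term_poly t1
  | TMul t1 t2 => term_poly t1 * term_poly t2
  end.

Lemma horner_term_poly b t : (term_poly t).[b] = eval_term io (cons_env b env) t.
Proof.
elim: t => [[|i]|a|t1 IH1 t2 IH2|t1 IH1|t1 IH1 t2 IH2] /=;
  by rewrite ?hornerX ?hornerC ?hornerD ?hornerN ?hornerM ?IH1 ?IH2.
Qed.

Definition term_value_poly (P : {poly E}) := forall i, term_value P`_i.

Lemma term_value_poly_term t : term_value_poly (term_poly t).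
Proof.
elim: t => [[|i]|a|t1 IH1 t2 IH2|t1 IH1|t1 IH1 t2 IH2] j /=.
- by rewrite coefX; case: (_ == _); [apply: term_value1 | apply: term_value0].
- by rewrite coefC; case: (_ == _); [apply: term_value_var | apply: term_value0].
- by rewrite coefC; case: (_ == _); [apply: term_value_const | apply: term_value0].
- by rewrite coefD; apply: term_valueD.
- by rewrite coefN; apply: term_valueN.
- by rewrite coefM; apply: term_value_sum => k; apply: term_valueM.
Qed.

Fixpoint qf_atoms (f : qf_formula F) : seq {poly E} :=
  match f with
  | QEq t1 t2 => [:: term_poly t1 - term_poly t2]
  | QTrue | QFalse => [::]
  | QNot g => qf_atoms g
  | QAnd g h | QOr g h => qf_atoms g ++ qf_atoms h
  end.

Lemma term_value_poly_atom f P : P \in qf_atoms f -> term_value_poly P.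
Proof.
elim: f => [t1 t2|||g IH|g IHg h IHh|g IHg h IHh] //=; last 2 first.
- by rewrite mem_cat => /orP [/IHg|/IHh].
- by rewrite mem_cat => /orP [/IHg|/IHh].
rewrite inE => /eqP -> i; rewrite coefB.
by apply: term_valueD; last apply: term_valueN; apply: term_value_poly_term.
Qed.

Lemma holds_qf_atoms_root f b u :
  (forall P, P \in qf_atoms f -> root P b = root P u) ->
  holds_qf io (cons_env b env) f <-> holds_qf io (cons_env u env) f.
Proof.
elim: f => [t1 t2|||g IH|g IHg h IHh|g IHg h IHh] //= same_roots; last 3 first.
- by rewrite IH.
- by rewrite IHg ?IHh // => P P_f; apply: same_roots; rewrite mem_cat P_f ?orbT.
- by rewrite IHg ?IHh // => P P_f; apply: same_roots; rewrite mem_cat P_f ?orbT.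
have := same_roots _ (mem_head _ _); rewrite /root !hornerD !hornerN !subr_eq0.
rewrite !horner_term_poly => rootsE.
by split => /eqP; [rewrite rootsE | rewrite -rootsE] => /eqP.
Qed.

Definition transcendental y := forall P, term_value_poly P -> P.[y] = 0 -> P = 0.

Lemma transcendental_root y P :
  transcendental y -> term_value_poly P -> root P y = (P == 0).
Proof.
move=> y_tr P_val; apply/idP/eqP => [/eqP /y_tr -> //|->]; exact: root0.
Qed.

Lemma holds_qf_transcendental f b u : transcendental b -> transcendental u ->
  holds_qf io (cons_env b env) f -> holds_qf io (cons_env u env) f.
Proof.
move=> b_tr u_tr; apply: (iffLR (holds_qf_atoms_root _)) => P /term_value_poly_atom P_val.
by rewrite !transcendental_root.
Qed.

Definition finite_term_values := exists sq : seq E, forall x : E, term_value x -> x \in sq.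

Lemma term_value_notin (sq : seq E) :
  ~ finite_term_values -> exists2 x, term_value x & x \notin sq.
Proof.
move=> infinite; apply: NNPP => none; apply: infinite; exists sq => x x_val.
by apply/negPn/negP => x_out; apply: none; exists x.
Qed.

Lemma term_value_nonroot (Q : {poly E}) :
  ~ finite_term_values -> Q != 0 -> exists2 u, term_value u & ~~ root Q u.
Proof.
move=> infinite Q_nz; apply: NNPP => all_roots.
have [sq [sq_uniq sq_size sq_val]] : exists sq : seq E,
    [/\ uniq sq, size sq = size Q & forall x, x \in sq -> term_value x].
  elim: (size Q) => [|m [sq [sq_uniq sq_size sq_val]]]; first by exists [::].
  have [x x_val x_out] := term_value_notin sq infinite.
  exists (x :: sq); rewrite /= x_out sq_uniq sq_size; split => // y.
  by rewrite inE => /predU1P [->|/sq_val].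
have : all (root Q) sq.
  by apply/allP => x /sq_val x_val; apply/negPn/negP => x_nr; apply: all_roots; exists x.
by move=> /(max_poly_roots Q_nz)/(_ sq_uniq); rewrite sq_size ltnn.
Qed.

Lemma holds_qf_term_value f b : ~ finite_term_values -> transcendental b ->
  holds_qf io (cons_env b env) f -> exists2 u, term_value u & holds_qf io (cons_env u env) f.
Proof.
move=> infinite b_tr b_f; pose Ps := [seq P <- qf_atoms f | P != 0].
have [|u u_val u_nr] := @term_value_nonroot (\prod_(P <- Ps) P) infinite.
  by rewrite prodf_seq_neq0; apply/allP => P; rewrite mem_filter => /andP [].
exists u => //; apply: (iffLR (holds_qf_atoms_root _)) b_f => P P_f.
rewrite (transcendental_root b_tr (term_value_poly_atom P_f)).
have [->|P_nz] := eqVneq P 0; first by rewrite root0.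
move: u_nr; rewrite /root horner_prod prodf_seq_neq0 => /allP /(_ P).
by rewrite mem_filter P_nz P_f => /(_ isT) /negbTE ->.
Qed.

Definition integral w := exists d (c : nat -> E),
  (forall i, term_value (c i)) /\ w ^+ d.+1 = \sum_(i < d.+1) c i * w ^+ i.

Lemma integral_term_value x : term_value x -> integral x.
Proof.
move=> x_val; exists 0%N, (fun=> x); split => //.
by rewrite big_ord1 expr0 expr1 mulr1.
Qed.

Lemma integral_scale (P : {poly E}) y : P != 0 -> term_value_poly P -> root P y ->
  exists c, [/\ term_value c, c != 0 & integral (c * y)].
Proof.
move=> P_nz P_val /eqP Py; set c := lead_coef P.
have c_nz : c != 0 by rewrite lead_coef_eq0.
case P_size : (size P) => [|[|d]].
- by move: P_nz; rewrite -size_poly_eq0 P_size.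
- move: Py c_nz; rewrite horner_coef P_size big_ord1 expr0 mulr1 => P0.
  by rewrite /c lead_coefE P_size P0 eqxx.
have cE : c = P`_d.+1 by rewrite /c lead_coefE P_size.
exists c; split; rewrite // ?cE //.
exists d, (fun i => - (P`_i * c ^+ (d - i))); split.
  move=> i; apply/term_valueN/term_valueM => //; apply: term_valueX; rewrite cE; apply: P_val.
move: Py; rewrite horner_coef P_size big_ord_recr /= -cE => /eqP; rewrite addr_eq0 => /eqP Py.
have -> : (c * y) ^+ d.+1 = c ^+ d * (c * y ^+ d.+1) by rewrite exprMn exprS; ring.
rewrite -[c * y ^+ d.+1]opprK -Py mulrN mulr_sumr -sumrN; apply: eq_bigr => i _.
by rewrite -{1}(subnK (ltnSE (ltn_ord i))) exprD exprMn; ring.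
Qed.

Lemma integral_pow_span w : integral w -> exists d, forall j, exists c : nat -> E,
  (forall i, term_value (c i)) /\ w ^+ j = \sum_(i < d.+1) c i * w ^+ i.
Proof.
move=> [d [c [c_val wE]]]; exists d; elim => [|j [c' [c'_val wjE]]].
  exists (fun i => (i == 0%N)%:R); split => [i|].
    by case: (_ == _); [apply: term_value1 | apply: term_value0].
  by rewrite big_ord_recl /= expr0 mulr1 big1 ?addr0 // => i _; rewrite mul0r.
exists (fun i => (if i is i'.+1 then c' i' else 0) + c' d * c i); split.
  move=> i; apply: term_valueD; last exact: term_valueM.
  by case: i => [|i]; [apply: term_value0 | apply: c'_val].
rewrite exprS wjE mulr_sumr [RHS](eq_bigr (fun i : 'I_d.+1 =>
  (if (i : nat) is i'.+1 then c' i' else 0) * w ^+ i + c' d * (c i * w ^+ i))); last first.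
  by move=> i _; rewrite mulrDl mulrA.
rewrite big_split /= -[X in _ = _ + X]mulr_sumr -wE big_ord_recr /=.
rewrite [X in _ = X + _]big_ord_recl /= mul0r add0r.
congr (_ + _); last by rewrite exprS mulrCA.
by apply: eq_bigr => i _; rewrite exprS mulrCA.
Qed.

Lemma finite_integral_pow_eq w : finite_term_values -> integral w ->
  exists a b, (a < b)%N /\ w ^+ a = w ^+ b.
Proof.
move=> [sq sqP] /integral_pow_span [d w_span].
pose T := [seq \sum_(i < d.+1) nth 0 sq (f i) * w ^+ i | f : {ffun 'I_d.+1 -> 'I_(size sq)}].
apply: (@pigeonhole _ (fun j => w ^+ j) T) => j.
have [c [c_val ->]] := w_span j.
have c_idx (i : 'I_d.+1) : (index (c i) sq < size sq)%N by rewrite index_mem; apply: sqP.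
apply/mapP; exists [ffun i => Ordinal (c_idx i)]; first by rewrite mem_enum.
by apply: eq_bigr => i _; rewrite ffunE /= nth_index //; apply: sqP.
Qed.

End TermValues.

Lemma common_bound (Q : nat -> nat -> Prop) L :
  (forall k B, Q k B -> Q k B.+1) -> (forall k, (k < L)%N -> exists B, Q k B) ->
  exists B, forall k, (k < L)%N -> Q k B.
Proof.
move=> QS; have QW k B B' : (B <= B')%N -> Q k B -> Q k B'.
  by move/subnK <-; elim: (B' - B)%N => // d IH /IH; rewrite addSn; apply: QS.
elim: L => [|L IH] Q_ex; first by exists 0%N.
have [B1 B1P] := IH (fun k k_L => Q_ex k (ltnW k_L)).
have [B2 B2P] := Q_ex L (ltnSn L).
exists (maxn B1 B2) => k; rewrite ltnS leq_eqVlt => /predU1P [->|k_L].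
  exact: QW (leq_maxr _ _) B2P.
exact: QW (leq_maxl _ _) (B1P k k_L).
Qed.

Section Subextensions.
Variables (F E : fieldType) (io : {rmorphism F -> E}) (S : E -> Prop).
Hypothesis S_subext : subextension io S.

Lemma subext_io a : S (io a). Proof. by case: S_subext. Qed.

Lemma subext0 : S 0. Proof. by rewrite -(rmorph0 io); apply: subext_io. Qed.

Lemma subextD x y : S x -> S y -> S (x + y).
Proof. by case: S_subext => _ SD _ _ _; apply: SD. Qed.

Lemma subextN x : S x -> S (- x).
Proof. by case: S_subext => _ _ SN _ _; apply: SN. Qed.

Lemma subextM x y : S x -> S y -> S (x * y).
Proof. by case: S_subext => _ _ _ SM _; apply: SM. Qed.

Lemma subextV x : S x -> x != 0 -> S x^-1.
Proof. by case: S_subext => _ _ _ _ SV; apply: SV. Qed.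

(* No hypothesis [y != 0] is needed since [x / 0 = 0]. *)
Lemma subext_div x y : S x -> S y -> S (x / y).
Proof.
move=> Sx Sy; have [->|y_nz] := eqVneq y 0; first by rewrite invr0 mulr0; apply: subext0.
by apply: subextM Sx (subextV Sy y_nz).
Qed.

Lemma subext_eval (e : nat -> E) t : (forall i, S (e i)) -> S (eval_term io e t).
Proof.
move=> Se; elim: t => [i|a|t1 IH1 t2 IH2|t1 IH1|t1 IH1 t2 IH2] /=.
- exact: Se.
- exact: subext_io.
- exact: subextD.
- exact: subextN.
- exact: subextM.
Qed.

Lemma subext_mem (x : seq E) :
  (forall k, (k < size x)%N -> S (nth 0 x k)) -> {in x, forall y, S y}.
Proof. by move=> Sx y y_x; rewrite -(nth_index 0 y_x); apply/Sx; rewrite index_mem. Qed.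

Lemma subext_nth (x : seq E) : {in x, forall y, S y} -> forall i, S (nth 0 x i).
Proof.
move=> Sx i; have [i_x|x_i] := ltnP i (size x); first by apply/Sx/mem_nth.
by rewrite nth_default //; apply: subext0.
Qed.

Lemma subext_term_value (s : seq E) z :
  (forall i, S (nth 0 s i)) -> term_value io s z -> S z.
Proof. by move=> Ss [t ->]; apply: subext_eval. Qed.

Definition has_witnesses (e : nat -> E) (hs : seq (qf_formula F)) :=
  forall h, List.In h hs -> (exists b, holds_qf io (cons_env b e) h) ->
    exists2 b, S b & holds_qf io (cons_env b e) h.

End Subextensions.

Section EmbeddingTransfer.
Variables (F E E' : fieldType) (io : {rmorphism F -> E}) (io' : {rmorphism F -> E'}).
Variables (S : E -> Prop) (g : E -> E').
Hypothesis S_subext : subextension io S.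
Hypothesis gD : forall x y, S x -> S y -> g (x + y) = g x + g y.
Hypothesis gM : forall x y, S x -> S y -> g (x * y) = g x * g y.
Hypothesis g1 : g 1 = 1.
Hypothesis g_io : forall a, g (io a) = io' a.

Lemma emb0 : g 0 = 0.
Proof. by rewrite -(rmorph0 io) g_io rmorph0. Qed.

Lemma embN x : S x -> g (- x) = - g x.
Proof.
move=> Sx; apply/eqP; rewrite -addr_eq0 addrC -gD ?subrr ?emb0 //.
exact: (subextN S_subext Sx).
Qed.

Lemma emb_inj x y : S x -> S y -> g x = g y -> x = y.
Proof.
move=> Sx Sy gxy; apply/eqP; rewrite -subr_eq0; apply: contraT => xy_nz.
have S_xy : S (x - y) := subextD S_subext Sx (subextN S_subext Sy).
have := gM S_xy (subextV S_subext S_xy xy_nz).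
rewrite divff // g1 gD ?embN ?gxy ?subrr ?mul0r //; last exact: (subextN S_subext Sy).
by move/eqP; rewrite oner_eq0.
Qed.

Lemma emb_eval (e : nat -> E) t : (forall i, S (e i)) ->
  g (eval_term io e t) = eval_term io' (g \o e) t.
Proof.
move=> Se; elim: t => [i|a|t1 IH1 t2 IH2|t1 IH1|t1 IH1 t2 IH2] //=.
- by rewrite gD ?IH1 ?IH2 //; apply: subext_eval S_subext _ _ Se.
- by rewrite embN ?IH1 //; apply: subext_eval S_subext _ _ Se.
- by rewrite gM ?IH1 ?IH2 //; apply: subext_eval S_subext _ _ Se.
Qed.

Lemma emb_holds_qf (e : nat -> E) f : (forall i, S (e i)) ->
  holds_qf io e f <-> holds_qf io' (g \o e) f.
Proof.
move=> Se; elim: f => [t1 t2|||h IH|h IHh k IHk|h IHh k IHk] /=;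
  rewrite ?IH ?IHh ?IHk //.
rewrite -!emb_eval //; split => [->//|]; apply: emb_inj; exact: subext_eval S_subext _ _ Se.
Qed.

Fixpoint pform_ex (f : pform F) : seq (qf_formula F) :=
  match f with
  | PQf _ => [::]
  | PEx h => [:: h]
  | PAnd f1 f2 | POr f1 f2 => pform_ex f1 ++ pform_ex f2
  end.

Lemma emb_holds_pform (e : nat -> E) f :
  (forall i, S (e i)) -> has_witnesses io S e (pform_ex f) ->
  holds_pform io e f -> holds_pform io' (g \o e) f.
Proof.
move=> Se; elim: f => [h|h|f1 IH1 f2 IH2|f1 IH1 f2 IH2] /= wit.
- by rewrite -emb_holds_qf.
- move=> /(wit h (or_introl erefl)) [b Sb b_h]; exists (g b).
  have -> : cons_env (g b) (g \o e) = g \o cons_env b e.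
    by apply: functional_extensionality => -[].
  by apply/emb_holds_qf => // -[].
- by case=> ? ?; split; [apply: IH1 | apply: IH2] => // h ?;
    apply/wit/List.in_or_app; [left|right].
- by case=> ?; [left; apply: IH1 | right; apply: IH2] => // h ?;
    apply/wit/List.in_or_app; [left|right].
Qed.

End EmbeddingTransfer.

Definition free_word (nf B : nat) : pred (seq nat) := fun v =>
  all (fun i => i < nf)%N v && all (fun i => count_mem i v <= B)%N (iota 0 nf).

Lemma free_wordW nf B B' v : (B <= B')%N -> free_word nf B v -> free_word nf B' v.
Proof.
move=> BB' /andP [v_nf /allP v_cnt]; rewrite /free_word v_nf.
by apply/allP => i /v_cnt /leq_trans; apply.
Qed.

Section IntegralWords.
Variables (F E : fieldType) (io : {rmorphism F -> E}) (gen : nat -> E).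
Local Notation monom := (monom gen).
Local Notation wspan := (wspan io gen).

Lemma wspan_integral_wordS nf k M : (nf <= k)%N ->
  wspan (integral_word nf k M) (gen k ^+ M.+1) ->
  wspan (integral_word nf k M.+1) (gen k ^+ M.+2).
Proof.
move=> nf_k kM; rewrite exprS -[X in X * _](monom_nseq gen 1).
apply: (wspan_mul _ (wspan_monom io gen (ok := pred1 (nseq 1 k)) (eqxx _)) kM).
move=> _ v /eqP -> /and3P [v_nf /allP v_free v_k].
rewrite /integral_word /= eqxx orbT v_nf add1n ltnS v_k /= andbT.
apply/allP => i i_nf; have := v_free i i_nf; move: i_nf; rewrite mem_iota.
by case: eqP => [<-|_] /=; lia.
Qed.

Lemma integral_bound nf r :
  (forall k, (nf <= k < nf + r)%N ->
     exists M, wspan (integral_word nf k M) (gen k ^+ M.+1)) ->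
  exists M, forall k, (nf <= k < nf + r)%N ->
    wspan (integral_word nf k M) (gen k ^+ M.+1).
Proof.
move=> gen_int; pose Q k M := (nf <= k)%N -> wspan (integral_word nf k M) (gen k ^+ M.+1).
have QS k M : Q k M -> Q k M.+1 by move=> kM nf_k; apply/wspan_integral_wordS/kM.
have Q_ex k : (k < nf + r)%N -> exists M, Q k M.
  move=> k_N; case: (leqP nf k) => [nf_k|k_nf]; last by exists 0%N => nf_k; exfalso; lia.
  by have [|M kM] := gen_int k; [lia | exists M].
have [M MP] := common_bound QS Q_ex.
by exists M => k /andP [nf_k k_N]; apply: MP.
Qed.

Lemma gen_subextension n nf r : (nf <= n)%N ->
  (forall k, (nf <= k < nf + r)%N ->
     exists M, wspan (integral_word nf k M) (gen k ^+ M.+1)) ->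
  exists S, [/\ subextension io S, trdeg_le io S n &
                forall k, (k < nf + r)%N -> S (gen k)].
Proof.
move=> nf_n /integral_bound [M gen_int]; exists (gen_field io gen nf r M); split.
- exact: gen_field_subextension.
- exact: gen_field_trdeg_le.
- by move=> k k_N; apply/gen_field_alg/gen_alg_gen.
Qed.

Lemma wspan_free_term_value s z : (forall i, (i < size s)%N -> gen i = nth 0 s i) ->
  term_value io s z -> exists B, wspan (free_word (size s) B) z.
Proof.
move=> genE [t ->].
elim: t => [i|a|t1 [B1 t1B] t2 [B2 t2B]|t1 [B1 t1B]|t1 [B1 t1B] t2 [B2 t2B]] /=.
- have [i_s|s_i] := ltnP i (size s); last by exists 0%N; rewrite nth_default //; apply: wspan0.
  exists 1%N; rewrite -genE // -[gen i]mulr1 -(monom_nil gen) -monom_cons.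
  by apply: wspan_monom; rewrite /free_word /= i_s /=; apply/allP => j _; case: eqP.
- exists 0%N; rewrite -[io a]mulr1 -(monom_nil gen).
  by apply: wspan_monomZ; rewrite /free_word /=; apply/allP.
- exists (B1 + B2)%N; apply: wspanD.
    by apply: wspanW t1B => v; apply/free_wordW/leq_addr.
  by apply: wspanW t2B => v; apply/free_wordW/leq_addl.
- by exists B1; apply: wspanN.
- exists (B1 + B2)%N; apply: (wspan_mul _ t1B t2B).
  move=> u v /andP [u_s /allP u_cnt] /andP [v_s /allP v_cnt].
  rewrite /free_word all_cat u_s v_s; apply/allP => i i_s.
  by rewrite count_cat leq_add ?u_cnt ?v_cnt.
Qed.

Lemma wspan_integral_word_pow nf k a b : (nf <= k)%N -> (a < b)%N ->
  gen k ^+ a = gen k ^+ b -> exists M, wspan (integral_word nf k M) (gen k ^+ M.+1).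
Proof.
move=> nf_k ab powE; have b_gt0 : (0 < b)%N by lia.
exists b.-1; rewrite prednK // -powE -monom_nseq; apply: wspan_monom.
rewrite /integral_word count_nseq /= eqxx mul1n; apply/and3P; split; last lia.
  by apply/allP => i /nseqP [-> _]; rewrite eqxx orbT.
apply/allP => i; rewrite mem_iota count_nseq => /andP [_ i_nf] /=.
by case: eqP => [ki|_]; [lia | rewrite mul0n].
Qed.

Lemma wspan_integral_word_integral s k :
  (forall i, (i < size s)%N -> gen i = nth 0 s i) -> (size s <= k)%N ->
  integral io s (gen k) -> exists M, wspan (integral_word (size s) k M) (gen k ^+ M.+1).
Proof.
move=> genE s_k [d [c [c_val kE]]].
have [B cB] := @common_bound (fun i B => wspan (free_word (size s) B) (c i)) d.+1
  (fun i B => wspanW (fun v => free_wordW (leqnSn B)))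
  (fun i _ => wspan_free_term_value genE (c_val i)).
set M := maxn B d; exists M.
have -> : gen k ^+ M.+1 = gen k ^+ (M - d) * gen k ^+ d.+1.
  by rewrite -exprD; congr (_ ^+ _); lia.
rewrite kE mulr_sumr; apply: big_ind => [||i _]; [exact: wspan0 | exact: wspanD |].
rewrite mulrCA -exprD -monom_nseq.
apply: (wspan_mul _ (cB i (ltn_ord i)) (wspan_monom io gen (ok := pred1 _) (eqxx _))).
move=> u _ /andP [/allP u_s /allP u_cnt] /eqP ->.
have cnt_k : count_mem k u = 0%N by apply/count_memPn/negP => /u_s; lia.
rewrite /integral_word all_cat count_cat cnt_k count_nseq /= eqxx mul1n add0n.
apply/and3P; split.
- by rewrite all_nseq eqxx !orbT andbT; apply/allP => j /u_s ->.
- apply/allP => j j_s; rewrite count_cat count_nseq /=.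
  have -> : (k == j) = false.
    by apply/negbTE/eqP => kj; move: j_s; rewrite -kj mem_iota ltnNge add0n s_k.
  by rewrite mul0n addn0 (leq_trans (u_cnt j j_s)) ?leq_maxl.
- by have := ltn_ord i; rewrite /M; lia.
Qed.

End IntegralWords.

Section WitnessingSubextension.
Variables (F E : fieldType) (io : {rmorphism F -> E}) (s : seq E).
Variables (n : nat) (hs : seq (qf_formula F)).
Local Notation env := (fun i : nat => nth 0 s i).
Local Notation holds_at b h := (holds_qf io (cons_env b env) h).

Definition witnessing_subextension (S : E -> Prop) :=
  [/\ subextension io S, trdeg_le io S n, forall i, S (nth 0 s i) &
      has_witnesses io S env hs].

Lemma algebraic_scale b : ~ transcendental io s b ->
  exists c, [/\ term_value io s c, c != 0 & integral io s (c * b)].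
Proof.
move=> b_alg; apply: NNPP => no_c; apply: b_alg => P P_val /eqP Pb.
by apply: NNPP => /eqP P_nz; apply: no_c; apply: integral_scale P_nz P_val Pb.
Qed.

Lemma witness_data : exists ws : seq E,
  {in ws, forall w, integral io s w} /\
  forall h, List.In h hs -> (exists b, holds_at b h) ->
    (exists2 b, transcendental io s b & holds_at b h) \/
    exists c w, [/\ term_value io s c, c != 0, w \in ws & holds_at (w / c) h].
Proof.
elim: hs => [|h hs' [ws [ws_int ws_wit]]]; first by exists [::].
case: (classic (exists b, holds_at b h)) => [[b b_h]|no_wit]; last first.
  by exists ws; split => // h' [<- /no_wit []|/ws_wit].
case: (classic (transcendental io s b)) => [b_tr|/algebraic_scale [c [c_val c_nz cb_int]]].
  by exists ws; split => // h' [<- _|/ws_wit //]; left; exists b.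
exists (c * b :: ws); split; first by move=> w; rewrite inE => /predU1P [->|/ws_int].
move=> h' [<- _|/ws_wit wit /wit [tr|[c' [w [c'_val c'_nz w_ws w_h]]]]].
- by right; exists c, (c * b); rewrite mem_head mulrC mulKf.
- by left.
- by right; exists c', w; rewrite inE w_ws orbT.
Qed.

Section AlgebraicWitnesses.
Variables (ws : seq E).
Hypothesis ws_int : {in ws, forall w, integral io s w}.
Hypothesis ws_wit : forall h, List.In h hs -> (exists b, holds_at b h) ->
  (exists2 b, transcendental io s b & holds_at b h) \/
  exists c w, [/\ term_value io s c, c != 0, w \in ws & holds_at (w / c) h].

Lemma subext_has_witnesses S : subextension io S ->
  (forall i, S (nth 0 s i)) -> {in ws, forall w, S w} ->
  (forall h b, transcendental io s b -> holds_at b h -> exists2 u, S u & holds_at u h) ->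
  has_witnesses io S env hs.
Proof.
move=> S_subext S_s S_ws tr_wit h h_hs.
case/(ws_wit h_hs) => [[b b_tr b_h]|[c [w [c_val c_nz w_ws w_h]]]].
  exact: tr_wit b_tr b_h.
exists (w / c) => //; apply: (subext_div S_subext (S_ws w w_ws)).
exact: (subext_term_value S_subext S_s c_val).
Qed.

Lemma witnessing_infinite : ~ finite_term_values io s -> (size s <= n)%N ->
  exists S, witnessing_subextension S.
Proof.
move=> infinite s_n; pose gen := nth 0 (s ++ ws).
have genE i : (i < size s)%N -> gen i = nth 0 s i by move=> i_s; rewrite /gen nth_cat i_s.
have [|S [S_subext S_trdeg S_gen]] := @gen_subextension _ _ io gen n (size s) (size ws) s_n.
  move=> k /andP [s_k k_N]; apply: (wspan_integral_word_integral genE s_k).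
  by apply/ws_int; rewrite /gen nth_cat ltnNge s_k /= mem_nth // -(ltn_add2l (size s)) subnKC.
have S_sws : {in s ++ ws, forall y, S y} by apply: subext_mem; rewrite size_cat.
have S_s : forall i, S (nth 0 s i).
  by apply: (subext_nth S_subext) => y y_s; apply: S_sws; rewrite mem_cat y_s.
exists S; split => //; apply: subext_has_witnesses => // [w w_ws|h b b_tr b_h].
  by apply: S_sws; rewrite mem_cat w_ws orbT.
have [u u_val u_h] := holds_qf_term_value infinite b_tr b_h.
by exists u => //; apply: (subext_term_value S_subext S_s u_val).
Qed.

Lemma witnessing_finite : finite_term_values io s -> (1 <= n)%N ->
  exists S, witnessing_subextension S.
Proof.
move=> finite n_gt0.
have [t t_tr] : exists t, forall b, transcendental io s b -> transcendental io s t.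
  case: (classic (exists b, transcendental io s b)) => [[t t_tr]|no_tr]; first by exists t.
  by exists 0 => b b_tr; case: no_tr; exists b.
have sws_int : {in s ++ ws, forall y, integral io s y}.
  move=> y; rewrite mem_cat => /orP [y_s|/ws_int //].
  by apply: integral_term_value; rewrite -(nth_index 0 y_s); apply: term_value_var.
pose gen := nth 0 (t :: s ++ ws).
have [|S [S_subext S_trdeg S_gen]] :=
  @gen_subextension _ _ io gen n 1 (size (s ++ ws)) n_gt0.
  move=> [|k] // /andP [_ k_N].
  have [a [b [ab powE]]] := finite_integral_pow_eq finite (sws_int _ (mem_nth 0 k_N)).
  exact: (@wspan_integral_word_pow _ _ io gen 1 k.+1 a b isT ab powE).
have S_tsws : {in t :: s ++ ws, forall y, S y} by apply: subext_mem.
exists S; split => //.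
- by apply: (subext_nth S_subext) => y y_s; apply: S_tsws; rewrite inE mem_cat y_s orbT.
- apply: subext_has_witnesses => // [i|w w_ws|h b b_tr b_h].
  + by apply: (subext_nth S_subext) => y y_s; apply: S_tsws; rewrite inE mem_cat y_s orbT.
  + by apply: S_tsws; rewrite inE mem_cat w_ws !orbT.
  exists t; first by apply: S_tsws; rewrite mem_head.
  exact: holds_qf_transcendental b_tr (t_tr b b_tr) b_h.
Qed.

End AlgebraicWitnesses.

Lemma witnessing_subextension_exists : (1 <= n)%N -> (size s <= n)%N ->
  exists S, witnessing_subextension S.
Proof.
move=> n_gt0 s_n; have [ws [ws_int ws_wit]] := witness_data.
case: (classic (finite_term_values io s)) => [finite|infinite].
  exact: witnessing_finite ws_int ws_wit finite n_gt0.
exact: witnessing_infinite ws_int ws_wit infinite s_n.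
Qed.

End WitnessingSubextension.

Unset Implicit Arguments.
Theorem lemma5p1 (F : fieldType) (n : nat) (phi : ex_formula F) :
  (1 <= n)%N -> is_EnE1_sentence n phi -> efd_Sigma_le phi n.
Proof.
move=> n_gt0 /andP [m_n _]; exists n; split => // E io [s [s_m s_phi]].
have [|S [S_subext S_trdeg S_s S_wit]] :=
  @witnessing_subextension_exists _ _ io s n (pform_ex (ex_matrix phi)) n_gt0.
  by rewrite s_m.
exists S; split => // E' io' [g [gD gM g1 g_io]].
exists (map g s); split; first by rewrite size_map.
have -> : (fun i => nth 0 (map g s) i) = g \o (fun i => nth 0 s i).
  apply: functional_extensionality => i; have [i_s|s_i] := ltnP i (size s).
    exact: nth_map.
  by rewrite /= !nth_default ?size_map // (emb0 g_io).
exact: (emb_holds_pform S_subext gD gM g1 g_io S_s S_wit s_phi).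
Qed.
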